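(* Let $A$ be an infinite set and $k\in\mathbb{N}$. Then the $k$-truncated powerset lattice $\mathcal{P}_k(A)$ is $\Theta(n^k)$.
   Context: The lattice $\mathcal{P}_k(A)$ consists of all subsets of $A$ of cardinality at most $k$, ordered by inclusion, together with an adjoined greatest element $\top$ (so the join of two sets is their union if it has at most $k$ elements, and $\top$ otherwise; the least element is $\emptyset$). For a lattice $\mathcal{L}$ with least upper bounds $\bigsqcup$ of finite sets ($\bigsqcup\emptyset=\bot$), the closure set of finite $S\subseteq\mathcal{L}$ is $C(S)=\{\bigsqcup S' : S'\subseteq S\}$, and $CS_{\mathcal{L}}(n)=\max\{|C(S)| : S\subseteq\mathcal{L}\text{ finite}, |S|\le n\}$. For $f,g:\mathbb{N}\to\mathbb{N}$, $f$ is $O(g)$ (resp. $\Omega(g)$) iff there exist $N_0\in\mathbb{N}$ and rational $C>0$ with $f(n)\le Cg(n)$ (resp. $\ge$) for all $n\ge N_0$; $\Theta$ means both. A lattice is $\Theta(f(n))$ iff its $CS$ is. *)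

From mathcomp Require Import all_boot all_algebra.
From mathcomp Require Import finmap.
From mathcomp Require Import boolp.

Set Implicit Arguments.
Unset Strict Implicit.
Unset Printing Implicit Defensive.

Local Open Scope fset_scope.

Definition infinite_type (A : eqType) : Prop :=
  forall s : seq A, exists x : A, x \notin s.

Section Pk.
Variables (A : choiceType) (k : nat).

Definition small_set := {X : {fset A} | #|` X| <= k}.

(* the lattice P_k(A): Some X for a small set X, None for the adjoined top *)
Definition Pk := option small_set.

Definition Pk_top : Pk := None.

Lemma fset0_small : #|` (fset0 : {fset A})| <= k.
Proof. by rewrite cardfs0. Qed.

Definition Pk_bot : Pk := Some (exist _ fset0 fset0_small).

(* binary join: union if it has at most k elements, top otherwise *)
Definition Pk_join (x y : Pk) : Pk :=
  match x, y with
  | Some X, Some Y => insub (val X `|` val Y)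
  | _, _ => None
  end.

Definition Pk_bigjoin (S : {fset Pk}) : Pk := \big[Pk_join/Pk_bot]_(x <- S) x.

Definition closure_set (S : {fset Pk}) : {fset Pk} :=
  [fset Pk_bigjoin S' | S' in fpowerset S].

Definition CS_pred (n : nat) : pred nat :=
  fun m => `[< exists S : {fset Pk}, #|` S| <= n /\ #|` closure_set S| = m >].

Lemma CS_pred_ex n : exists m, CS_pred n m.
Proof.
exists #|` closure_set fset0|; apply/asboolP; by exists fset0; split => //; rewrite cardfs0.
Qed.

Lemma CS_pred_bound n m : CS_pred n m -> m <= 2 ^ n.
Proof.
move/asboolP => [S [HS <-]].
apply: leq_trans (leq_imfset_card _ _ _) _.
rewrite (@perm_size _ _ (fpowerset S)); last first.
  by apply: uniq_perm; rewrite ?enum_finmem_uniq ?fset_uniq // => x; rewrite enum_finmemE.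
by rewrite card_fpowerset leq_exp2l.
Qed.

Definition CS (n : nat) : nat := ex_maxn (CS_pred_ex n) (@CS_pred_bound n).

End Pk.

Local Open Scope ring_scope.

Definition bigO (f g : nat -> nat) : Prop :=
  exists (N0 : nat) (C : rat), 0 < C /\
    forall n : nat, (N0 <= n)%N -> (f n)%:R <= C * (g n)%:R.

Definition bigOmega (f g : nat -> nat) : Prop :=
  exists (N0 : nat) (C : rat), 0 < C /\
    forall n : nat, (N0 <= n)%N -> (f n)%:R >= C * (g n)%:R.

Definition bigTheta (f g : nat -> nat) : Prop := bigO f g /\ bigOmega f g.

From mathcomp Require Import all_boot all_algebra.
From mathcomp Require Import finmap.
From mathcomp Require Import boolp zify.

(* A join of members of S other than the top is a set of at most k points of
   the union of S, which has at most k |S| points; counting such sets gives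
   |C(S)| <= 1 + (k |S| + 1)^k.  Conversely, for n distinct points of the
   infinite set A, the joins of the singletons of any k of them are pairwise
   distinct k-sets, so CS(n) >= C(n, k) >= n^k / (2^k k!) once n >= 2k. *)

Set Implicit Arguments.
Unset Strict Implicit.
Unset Printing Implicit Defensive.

Local Open Scope fset_scope.

Lemma card_small_sets (T : finType) (k : nat) :
  #|[set Y : {set T} | #|Y| <= k]| <= #|T|.+1 ^ k.
Proof.
pose entries (g : {ffun 'I_k -> option T}) := [set x | Some x \in codom g].
have /subset_leq_card : [set Y : {set T} | #|Y| <= k] \subset entries @: setT.
  apply/subsetP => Y; rewrite inE => cardY.
  pose s := map Some (enum Y).
  pose g := [ffun i : 'I_k => nth None s i].
  apply/imsetP; exists g; rewrite ?inE //; apply/setP => x; rewrite inE.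
  apply/idP/codomP => [Yx | [i]].
    have ltx : index (Some x) s < k.
      rewrite (leq_trans _ cardY) // cardE -(size_map Some).
      by rewrite index_mem map_f ?mem_enum.
    by exists (Ordinal ltx); rewrite ffunE nth_index // map_f ?mem_enum.
  rewrite ffunE; have [lti | /(nth_default None) ->] := ltnP i (size s) => // xi.
  by move: (mem_nth None lti); rewrite -xi mem_map ?mem_enum //; apply: Some_inj.
move/leq_trans; apply; rewrite (leq_trans (leq_imset_card _ _)) //.
by rewrite cardsT card_ffun card_option card_ord.
Qed.

Lemma leq_expn2r m n e : m <= n -> m ^ e <= n ^ e.
Proof. by move=> le_mn; case: e => // e; rewrite leq_exp2r. Qed.

Lemma card_fpowerset_sizes (K : choiceType) (B : {fset K}) (P : pred nat) :
  #|` [fset X in fpowerset B | P #|` X|]| = #|[set Y : {set B} | P #|Y|]|.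
Proof.
transitivity #|` [fset fsub B X | X in fpowerset B & P #|` X|]|.
  rewrite [LHS]card_imfset // card_in_imfset // => X Y; rewrite !inE !fpowersetE.
  by move=> /andP[XB _] /andP[YB _]; apply: fsub_inj.
rewrite -card_finset; congr #|` _|; apply/fsetP => Y; rewrite !inE.
apply/imfsetP/idP => /= [[X] | PY].
  by rewrite !inE fpowersetE => /andP[XB PX] ->; rewrite card_fsub.
exists [fsetval y in Y]; rewrite ?FSetK // !inE fpowersetE.
rewrite -(card_fsub (fset_sub_val _ _)) FSetK PY andbT.
by apply/fsubsetP => x /in_fset_valP [].
Qed.

Lemma card_bigfcup_leq (I : eqType) (K : choiceType) (s : seq I)
    (F : I -> {fset K}) :
  #|` \bigcup_(i <- s) F i| <= \sum_(i <- s) #|` F i|.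
Proof.
elim/big_rec2: _ => [|i n X _ leXn]; first by rewrite cardfs0.
by rewrite (leq_trans (leq_card_fsetU _ _)) ?leq_add2l.
Qed.

Lemma infinite_type_fset (A : choiceType) (n : nat) :
  infinite_type A -> exists X : {fset A}, #|` X| = n.
Proof.
move=> infA; elim: n => [|n [X cardX]]; first by exists fset0; rewrite cardfs0.
have [x xX] := infA X; exists (x |` X).
by rewrite cardfsU1 cardX xX.
Qed.

Section TruncatedPowerset.
Variables (A : choiceType) (k : nat).
Local Notation Pk := (Pk A k).

Definition carrier (x : Pk) : {fset A} := if x is Some X then val X else fset0.

Lemma card_carrier (x : Pk) : #|` carrier x| <= k.
Proof. by case: x => [X|]; rewrite ?cardfs0 ?(valP X). Qed.

Lemma Pk_botE : Pk_bot A k = insub fset0.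
Proof. by rewrite insubT ?cardfs0 //; congr Some; apply: val_inj. Qed.

Lemma Pk_join_insub (X : small_set A k) (Y : {fset A}) :
  Pk_join (Some X) (insub Y) = insub (val X `|` Y).
Proof.
case: insubP => [Y' _ <- // | bigY]; rewrite insubF //; apply: contraNF bigY.
exact/leq_trans/fsubset_leq_card/fsubsetUr.
Qed.

Lemma big_Pk_joinE (s : seq Pk) :
  \big[@Pk_join A k/Pk_bot A k]_(x <- s) x =
  if None \in s then None else insub (\bigcup_(x <- s) carrier x) : Pk.
Proof.
elim: s => [|x s IH]; first by rewrite !big_nil Pk_botE.
rewrite !big_cons inE IH; case: x => [X|] //.
by case: (None \in s) => //; rewrite Pk_join_insub.
Qed.

Lemma Pk_bigjoinE (S : {fset Pk}) :
  Pk_bigjoin S = if None \in S then None else insub (\bigcup_(x <- S) carrier x) : Pk.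
Proof. exact: big_Pk_joinE. Qed.

Lemma closure_set_sub (S : {fset Pk}) :
  closure_set S `<=` None |` [fset (insub X : Pk) | X in
    [fset X in fpowerset (\bigcup_(x <- S) carrier x) | #|` X| <= k]].
Proof.
apply/fsubsetP => y /imfsetP [S' /=]; rewrite fpowersetE => S'S ->.
rewrite Pk_bigjoinE; case: ifP => _; first by rewrite fset1U1.
case: insubP => [X _ XE | _]; last by rewrite fset1U1.
apply/fset1Ur/imfsetP; exists (val X); rewrite ?valK //.
rewrite !inE fpowersetE (valP X) andbT XE; apply/bigfcupsP => x xS' _.
by apply: bigfcup_sup => //; apply: (fsubsetP S'S).
Qed.

Lemma card_bigfcup_carrier (S : {fset Pk}) :
  #|` \bigcup_(x <- S) carrier x| <= k * #|` S|.
Proof.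
rewrite (leq_trans (card_bigfcup_leq _ _)) // (@leq_trans (\sum_(x <- S) k)) //.
- by apply: leq_sum => x _; apply: card_carrier.
- by rewrite big_const_seq iter_addn_0 count_predT mulnC.
Qed.

Lemma card_closure_set_leq (S : {fset Pk}) :
  #|` closure_set S| <= (k * #|` S|).+1 ^ k + 1.
Proof.
rewrite (leq_trans (fsubset_leq_card (closure_set_sub S))) //.
rewrite (leq_trans (leq_card_fsetU _ _)) // cardfs1 addnC leq_add2r.
rewrite (leq_trans (leq_imfset_card _ _ _)) //=.
rewrite (card_fpowerset_sizes _ (fun n => n <= k)) (leq_trans (card_small_sets _ _)) //.
by rewrite leq_expn2r // ltnS -cardfE card_bigfcup_carrier.
Qed.

Lemma carrier_insub (X : {fset A}) : #|` X| <= k -> carrier (insub X) = X.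
Proof. by move=> smallX; rewrite insubT. Qed.

Definition Pk_singleton (a : A) : Pk := insub [fset a].

Lemma Pk_bigjoin_singletons (Y : {fset A}) :
  #|` Y| <= k -> Pk_bigjoin (Pk_singleton @` Y) = insub Y.
Proof.
move=> cardY; have carrierE a : a \in Y -> carrier (Pk_singleton a) = [fset a].
  move=> aY; rewrite carrier_insub // cardfs1 (leq_trans _ cardY) // cardfs_gt0.
  by apply/fset0Pn; exists a.
rewrite Pk_bigjoinE ifF; last first.
  apply/imfsetP => -[a aY /(congr1 carrier)]; rewrite carrierE //= => /fsetP/(_ a).
  by rewrite !inE eqxx.
congr insub; apply/fsetP => b.
apply/bigfcupP/idP => [[_ /andP[/imfsetP[a aY ->] _]] | bY].
  by rewrite carrierE // inE => /eqP ->.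
by exists (Pk_singleton b); rewrite ?carrierE ?inE ?in_imfset.
Qed.

Lemma binomial_leq_card_closure_set (X : {fset A}) :
  'C(#|` X|, k) <= #|` closure_set (Pk_singleton @` X)|.
Proof.
rewrite cardfE -card_draws -(card_fpowerset_sizes _ (pred1 k)).
have -> : #|` [fset Y in fpowerset X | pred1 k #|` Y|]| =
          #|` [fset (insub Y : Pk) | Y in fpowerset X & #|` Y| == k]|.
  rewrite [LHS]card_imfset // card_in_imfset // => Y Z; rewrite !inE.
  move=> /andP[_ /eqP cardY] /andP[_ /eqP cardZ] /(congr1 carrier).
  by rewrite !carrier_insub ?cardY ?cardZ.
apply/fsubset_leq_card/fsubsetP => y /imfsetP[Y]; rewrite !inE fpowersetE.
move=> /andP[YX /eqP cardY] ->; apply/imfsetP; exists (Pk_singleton @` Y).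
  by rewrite fpowersetE; apply: subset_imfset; apply/fsubsetP.
by rewrite Pk_bigjoin_singletons ?cardY.
Qed.
End TruncatedPowerset.

Lemma card_closure_set_leq_CS (A : choiceType) (k n : nat) (S : {fset Pk A k}) :
  #|` S| <= n -> #|` closure_set S| <= CS A k n.
Proof.
by move=> cardS; rewrite /CS; case: ex_maxnP => m _; apply; apply/asboolP; exists S.
Qed.

Lemma CS_attained (A : choiceType) (k n : nat) :
  exists2 S : {fset Pk A k}, #|` S| <= n & #|` closure_set S| = CS A k n.
Proof. by rewrite /CS; case: ex_maxnP => m /asboolP[S [cardS <-]] _; exists S. Qed.

Lemma CS_leq (A : choiceType) (k n : nat) : CS A k n <= (k * n).+1 ^ k + 1.
Proof.
have [S cardS <-] := CS_attained A k n.
rewrite (leq_trans (card_closure_set_leq S)) // leq_add2r leq_expn2r //.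
by rewrite ltnS leq_mul2l cardS orbT.
Qed.

Lemma binomial_leq_CS (A : choiceType) (k n : nat) :
  infinite_type A -> 'C(n, k) <= CS A k n.
Proof.
move=> infA; have [X cardX] := infinite_type_fset n infA.
rewrite -cardX (leq_trans (binomial_leq_card_closure_set k X)) //.
by rewrite card_closure_set_leq_CS // (leq_trans (leq_imfset_card _ _ _)).
Qed.

Lemma expn_leq_ffact (n k : nat) : 2 * k <= n -> n ^ k <= 2 ^ k * n ^_ k.
Proof.
elim: k => [|k IH] le2k_n; first by rewrite ffactn0.
by rewrite expnSr ffactnSr expnSr mulnACA leq_mul ?IH //; lia.
Qed.

Lemma CS_leq_expn (A : choiceType) (k n : nat) :
  0 < n -> CS A k n <= (k.+1 ^ k + 1) * n ^ k.
Proof.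
move=> n_gt0; rewrite (leq_trans (CS_leq A k n)) // mulnDl mul1n.
rewrite leq_add ?expn_gt0 ?n_gt0 // -expnMn leq_expn2r //.
by rewrite mulSn addnC -addn1 leq_add2l.
Qed.

Lemma expn_leq_CS (A : choiceType) (k n : nat) :
  infinite_type A -> 2 * k <= n -> n ^ k <= 2 ^ k * k`! * CS A k n.
Proof.
move=> infA le2k_n; rewrite (leq_trans (expn_leq_ffact le2k_n)) // -bin_ffact.
by rewrite -mulnA leq_mul2l mulnC leq_mul2l binomial_leq_CS ?orbT.
Qed.

Import GRing.Theory Num.Theory.

Theorem mainTheorem7 (A : choiceType) (k : nat) (HA : infinite_type A) :
  bigTheta (CS A k) (fun n => n ^ k).
Proof.
split.
  exists 1, (k.+1 ^ k + 1)%:R%R; split => [|n n_gt0]; first by rewrite ltr0n addn1.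
  by rewrite -natrM ler_nat CS_leq_expn.
exists (2 * k), (2 ^ k * k`!)%:R^-1%R; split => [|n le2k_n].
  by rewrite invr_gt0 ltr0n muln_gt0 expn_gt0 fact_gt0.
rewrite ler_pdivrMl ?ltr0n ?muln_gt0 ?expn_gt0 ?fact_gt0 //.
by rewrite -natrM ler_nat expn_leq_CS.
Qed.
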